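(* A finite graph is $\mathcal{C}$-$\mathrm{MI}$ if and only if it is isomorphic to a disjoint union of copies of one of the following: (i) a complete graph $K_n$ ($n\ge1$); (ii) a complete bipartite graph $K_{s,s}$ with parts of the same size ($s\ge2$); (iii) a cycle $C_n$ ($n\ge3$).
   Context: Graphs are simple; subgraphs are induced. A homomorphism of graphs maps edges to edges; a monomorphism is an injective homomorphism; an automorphism is a bijective endomorphism whose inverse is also a homomorphism. A graph $G$ is $\mathcal{C}$-$\mathrm{MI}$ if every monomorphism from a finite connected induced subgraph of $G$ into $G$ extends to an automorphism of $G$. *)

(* Finite simple graphs: a symmetric irreflexive relation on a finType. *)
From mathcomp Require Import all_boot.
Set Implicit Arguments. Unset Strict Implicit. Unset Printing Implicit Defensive.

Definition connected_in (T : finType) (e : rel T) (A : {set T}) : bool :=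
  (A != set0) &&
  [forall x in A, forall y in A,
     connect (fun u v => [&& u \in A, v \in A & e u v]) x y].

(* Every monomorphism from a finite connected induced subgraph into G extends to
   an automorphism of G.  A map on A is represented by a total map T -> T
   (its values outside A are irrelevant). *)
Definition CMI (T : finType) (e : rel T) : Prop :=
  forall (A : {set T}), connected_in e A ->
  forall f : T -> T,
    {in A &, injective f} ->
    {in A &, forall x y, e x y -> e (f x) (f y)} ->
    exists g : T -> T,
      [/\ bijective g, (forall x y, e (g x) (g y) = e x y) & {in A, forall x, g x = f x}].

Definition graph_iso (T U : finType) (e : rel T) (e' : rel U) : Prop :=
  exists f : T -> U, bijective f /\ (forall x y, e' (f x) (f y) = e x y).

Definition copies (k : nat) {V : finType} (eV : rel V) : rel ('I_k * V) :=
  fun p q => (p.1 == q.1) && eV p.2 q.2.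

Arguments copies k {V} eV.

Definition complete_graph (n : nat) : rel 'I_n := fun i j => i != j.

Definition Kss (s : nat) : rel (bool * 'I_s) := fun p q => p.1 != q.1.

Definition cycle_graph (n : nat) : rel 'I_n :=
  fun i j => (val j == (val i).+1 %% n) || (val i == (val j).+1 %% n).

Arguments complete_graph n : clear implicits.
Arguments Kss s : clear implicits.
Arguments cycle_graph n : clear implicits.

(* If [G] is C-MI, every single-vertex map extends to an automorphism, so [G] is vertex-transitive
   and all its components are isomorphic.  Moreover a path [q] as long as an induced path [p]
   is itself induced, since [p i |-> q i] extends to an automorphism.  If every path on three
   vertices spans a triangle, the components are cliques.  Otherwise [G] is triangle-free; of
   degree 2 its components are cycles, and of degree at least 3 any induced path on four
   vertices could be extended indefinitely, so [G] has no induced P4 and each component is a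
   complete bipartite graph, balanced by regularity.  Conversely, a monomorphism from a connected
   subgraph of [K_n], [K_{s,s}] or [C_n] is rigid enough to be the restriction of an
   automorphism (an arbitrary permutation, a side-respecting one, a dihedral map), and C-MI is
   preserved by isomorphisms and disjoint copies. *)

From mathcomp Require Import all_boot zify ssralg zmodp ring.
From mathcomp Require fingroup perm.
Set Implicit Arguments. Unset Strict Implicit. Unset Printing Implicit Defensive.

Lemma connect_homo (T U : finType) (r : rel T) (r' : rel U) (h : T -> U) :
  (forall u v, r u v -> r' (h u) (h v)) ->
  forall x y, connect r x y -> connect r' (h x) (h y).
Proof.
move=> hom x y /connectP [p pth ->].
elim: p x pth => [|z p IH] x /=; first by rewrite connect0.
by case/andP=> rxz pth; apply: connect_trans (connect1 (hom _ _ rxz)) (IH _ pth).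
Qed.

Section Automorphisms.
Variables (T : finType) (e : rel T).
Hypotheses (e_sym : symmetric e) (e_irr : irreflexive e).

Definition edge_in (A : {set T}) : rel T :=
  fun u v => [&& u \in A, v \in A & e u v].

Lemma edge_in_sym A : symmetric (edge_in A).
Proof. by move=> u v; rewrite /edge_in e_sym; case: (u \in A); case: (v \in A). Qed.

Lemma connected_inP A x y :
  connected_in e A -> x \in A -> y \in A -> connect (edge_in A) x y.
Proof. by case/andP=> _ /forall_inP/(_ x) cA xA yA; move/forall_inP: (cA xA); apply. Qed.

Lemma connected_in1 x : connected_in e [set x].
Proof.
apply/andP; split; first by apply/set0Pn; exists x; rewrite inE.
by apply/forall_inP=> a /set1P->; apply/forall_inP=> b /set1P->; apply: connect0.
Qed.

Lemma connected_in2 x y : e x y -> connected_in e [set x; y].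
Proof.
move=> xy; apply/andP; split; first by apply/set0Pn; exists x; rewrite !inE eqxx.
have cxy : connect (edge_in [set x; y]) x y by apply: connect1; rewrite /edge_in !inE !eqxx orbT.
apply/forall_inP=> a /set2P[] ->; apply/forall_inP=> b /set2P[] ->;
  by rewrite ?connect0 // (sym_connect_sym (edge_in_sym _)).
Qed.

Definition graph_auto (g : T -> T) :=
  bijective g /\ forall x y, e (g x) (g y) = e x y.

Lemma graph_auto_finv g : graph_auto g -> graph_auto (finv g).
Proof.
case=> /bij_inj g_inj ge; split; first exact: finv_bij.
by move=> x y; rewrite -ge !(f_finv g_inj).
Qed.

Lemma graph_auto_connect g x y : graph_auto g -> connect e x y -> connect e (g x) (g y).
Proof. by case=> _ ge; apply: connect_homo => u v; rewrite ge. Qed.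

Definition nbhd x := [set y | e x y].

Lemma graph_auto_nbhd g x : graph_auto g -> #|nbhd (g x)| = #|nbhd x|.
Proof.
case=> /bij_inj g_inj ge; rewrite -[RHS](card_imset _ g_inj); apply: eq_card => z.
rewrite !inE; apply/idP/imsetP => [gxz | [y]]; last by rewrite inE -ge => ? ->.
by exists (finv g z); rewrite ?(f_finv g_inj) // inE -ge (f_finv g_inj).
Qed.

Hypothesis cmi : CMI e.

Lemma CMI_mono_reflect A f : connected_in e A -> {in A &, injective f} ->
  {in A &, forall x y, e x y -> e (f x) (f y)} ->
  {in A &, forall x y, e (f x) (f y) = e x y}.
Proof.
move=> cA f_inj f_hom; have [g [_ ge gf]] := cmi cA f_inj f_hom.
by move=> x y xA yA; rewrite -gf // -(gf y) // ge.
Qed.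

Lemma CMI_transitive x y : exists2 g, graph_auto g & g x = y.
Proof.
have [|//|g [gb ge gf]] := cmi (connected_in1 x) (f := fun=> y).
  by move=> a b /set1P-> /set1P->.
by move=> a b /set1P-> /set1P->; rewrite e_irr.
by exists g; last by apply: gf; rewrite inE.
Qed.

Lemma CMI_regular x y : #|nbhd x| = #|nbhd y|.
Proof. by have [g ga <-] := CMI_transitive y x; rewrite graph_auto_nbhd. Qed.

End Automorphisms.

Lemma connected_in_image (T U : finType) (e : rel T) (e' : rel U) (h : T -> U) (A : {set T}) :
  {in A &, forall x y, e x y -> e' (h x) (h y)} ->
  connected_in e A -> connected_in e' (h @: A).
Proof.
move=> h_hom cA; apply/andP; split.
  by case/andP: cA => /set0Pn[a aA] _; apply/set0Pn; exists (h a); apply: imset_f.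
apply/forall_inP=> _ /imsetP[x xA ->]; apply/forall_inP=> _ /imsetP[y yA ->].
move: (connected_inP cA xA yA); apply: connect_homo => u v /and3P[uA vA uv].
by rewrite /edge_in !imset_f ?h_hom.
Qed.

Lemma CMI_iso (T U : finType) (e : rel T) (e' : rel U) :
  graph_iso e e' -> CMI e' -> CMI e.
Proof.
case=> phi [[phi' phiK phi'K] phi_e] cmi A cA f f_inj f_hom.
pose f' x' := phi (f (phi' x')).
have cA' : connected_in e' (phi @: A) by apply: connected_in_image cA => x y _ _; rewrite phi_e.
have f'_inj : {in phi @: A &, injective f'}.
  move=> _ _ /imsetP[x xA ->] /imsetP[y yA ->]; rewrite /f' !phiK => /(can_inj phiK).
  by move/f_inj => -> //.
have f'_hom : {in phi @: A &, forall x y, e' x y -> e' (f' x) (f' y)}.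
  by move=> _ _ /imsetP[x xA ->] /imsetP[y yA ->]; rewrite /f' !phiK !phi_e; apply: f_hom.
have [g' [[h' g'K h'K] g'_e g'_f]] := cmi _ cA' f' f'_inj f'_hom.
exists (phi' \o g' \o phi); split.
- by exists (phi' \o h' \o phi) => x /=; rewrite ?phi'K ?g'K ?h'K phiK.
- by move=> x y /=; rewrite -[RHS]phi_e -g'_e -phi_e !phi'K.
- by move=> x xA /=; rewrite g'_f ?imset_f // /f' !phiK.
Qed.

Lemma copies_fst (k : nat) (V : finType) (eV : rel V) (A : {set 'I_k * V}) :
  connected_in (copies k eV) A -> {in A &, forall p q, p.1 = q.1}.
Proof.
move=> cA p q pA qA; apply/eqP.
have cl : closed (edge_in (copies k eV) A) [pred z | z.1 == p.1].
  by move=> u v /and3P[_ _ /andP[/eqP uv _]]; rewrite !inE /= uv.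
by have := closed_connect cl (connected_inP cA pA qA); rewrite !inE eqxx eq_sym => <-.
Qed.

Section Copies.
Import fingroup perm.

Lemma CMI_copies k (V : finType) (eV : rel V) : CMI eV -> CMI (copies k eV).
Proof.
move=> cmi A cA f f_inj f_hom.
have [a0 a0A] : exists a0, a0 \in A by case/andP: cA => /set0Pn.
set i := a0.1; set j := (f a0).1.
have A_i c v : (c, v) \in A -> c = i by move/(copies_fst cA a0A).
have cfA : connected_in (copies k eV) (f @: A) := connected_in_image f_hom cA.
pose A' := snd @: A.
have cA' : connected_in eV A' by apply: connected_in_image cA => p q _ _ /andP[].
have A'A v : v \in A' -> (i, v) \in A.
  by case/imsetP=> -[c w] cwA ->; rewrite -(A_i _ _ cwA).
pose f' v := (f (i, v)).2.
have fE v : v \in A' -> f (i, v) = (j, f' v).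
  move/A'A => vA; rewrite /f' /j (copies_fst cfA (imset_f f a0A) (imset_f f vA)).
  by case: (f _).
have f'_inj : {in A' &, injective f'}.
  move=> v w vA wA vw; have := f_inj _ _ (A'A _ vA) (A'A _ wA).
  by rewrite !fE // vw => /(_ erefl) [].
have f'_hom : {in A' &, forall v w, eV v w -> eV (f' v) (f' w)}.
  move=> v w vA wA vw; have := f_hom _ _ (A'A _ vA) (A'A _ wA).
  by rewrite !fE // /copies /= eqxx vw => /(_ isT) /andP[].
have [g' [[h' g'K h'K] g'_e g'_f]] := cmi _ cA' f' f'_inj f'_hom.
exists (fun p => (tperm i j p.1, g' p.2)); split.
- by exists (fun p => (tperm i j p.1, h' p.2)) => -[c v] /=; rewrite tpermK ?g'K ?h'K.
- by move=> [c v] [d w]; rewrite /copies /= g'_e (inj_eq perm_inj).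
- move=> [c v] cvA; have vA' : v \in A' by apply: (imset_f snd cvA).
  by rewrite /= (A_i _ _ cvA) fE // tpermL g'_f.
Qed.

End Copies.

(* Outside [A], the extension matches the complement of [A] with that of [f @: A] in enumeration order. *)
Lemma inj_in_bij_extension (T : finType) (A : {set T}) (f : T -> T) :
  {in A &, injective f} -> exists2 g, bijective g & {in A, g =1 f}.
Proof.
move=> f_inj; pose sA := enum (~: A); pose sB := enum (~: (f @: A)).
have size_s : size sA = size sB.
  by rewrite -!cardE; have := cardsC A; have := cardsC (f @: A); rewrite card_in_imset //; lia.
exists (fun x => if x \in A then f x else nth x sB (index x sA)); last by move=> x ->.
have outB z : z \notin A -> nth z sB (index z sA) \notin f @: A.
  move=> zA; rewrite -in_setC -mem_enum mem_nth // -size_s index_mem mem_enum inE //.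
apply: injF_bij => x y; case: ifP => xA; case: ifP => yA.
- exact: f_inj.
- by move=> fxy; have := outB _ (negbT yA); rewrite -fxy imset_f.
- by move=> fxy; have := outB _ (negbT xA); rewrite fxy imset_f.
move=> nxy; have xs : x \in sA by rewrite mem_enum inE xA.
have ys : y \in sA by rewrite mem_enum inE yA.
suff : index x sA = index y sA by move/(congr1 (nth x sA)); rewrite !nth_index.
have ix : index x sA < size sB by rewrite -size_s index_mem.
have iy : index y sA < size sB by rewrite -size_s index_mem.
by apply/eqP; rewrite -(nth_uniq x ix iy (enum_uniq _)) nxy (set_nth_default y).
Qed.

Lemma CMI_complete_graph n : CMI (complete_graph n).
Proof.
move=> A _ f f_inj _; have [g gb gf] := inj_in_bij_extension f_inj.
by exists g; split=> // x y; rewrite /complete_graph (inj_eq (bij_inj gb)).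
Qed.

Lemma Kss_side_shift s (A : {set bool * 'I_s}) (f : bool * 'I_s -> bool * 'I_s) :
  connected_in (Kss s) A -> {in A &, forall x y, Kss s x y -> Kss s (f x) (f y)} ->
  exists t, {in A, forall x, (f x).1 = x.1 (+) t}.
Proof.
move=> cA f_hom; have [a0 a0A] : exists a0, a0 \in A by case/andP: cA => /set0Pn.
exists ((f a0).1 (+) a0.1) => x xA.
pose shift_a0 := [pred z | (z \in A) ==> ((f z).1 (+) z.1 == (f a0).1 (+) a0.1)].
have cl : closed (edge_in (Kss s) A) shift_a0.
  move=> u v /and3P[uA vA uv]; rewrite !inE uA vA /=.
  have := f_hom _ _ uA vA uv; move: uv; rewrite /Kss.
  by case: u.1; case: v.1; case: (f u).1; case: (f v).1.
have := closed_connect cl (connected_inP cA a0A xA).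
rewrite !inE a0A xA eqxx /= => /esym/eqP <-.
by case: x.1; case: (f x).1.
Qed.

Lemma CMI_Kss s : CMI (Kss s).
Proof.
move=> A cA f f_inj f_hom; have [t ft] := Kss_side_shift cA f_hom.
have inj_side c : {in [set v | (c, v) \in A] &, injective (fun v => (f (c, v)).2)}.
  move=> v w; rewrite !inE => vA wA vw; suff: (c, v) = (c, w) by case.
  apply: f_inj => //; move: vw (ft _ vA) (ft _ wA).
  by case: (f (c, v)) => a b; case: (f (c, w)) => a' b' /= -> -> ->.
have [gT gTb gTf] := inj_in_bij_extension (inj_side true).
have [gF gFb gFf] := inj_in_bij_extension (inj_side false).
exists (fun p => (p.1 (+) t, if p.1 then gT p.2 else gF p.2)); split.
- apply: injF_bij => -[c v] [d w] /= []; clear ft.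
  by case: c; case: d; case: t => //= _; by [move/(bij_inj gTb) -> | move/(bij_inj gFb) ->].
- by clear ft => -[c v] [d w]; rewrite /Kss /=; case: c; case: d; case: t.
- move=> [c v] cvA /=; rewrite -(ft _ cvA) /=.
  by case: c cvA => cvA; rewrite ?gTf ?gFf ?inE //; case: (f _).
Qed.

Section CycleGraph.
Import GRing.Theory.
Local Open Scope ring_scope.
Variable m : nat.
Local Notation Cn := (cycle_graph m.+3).

Lemma cycle_graphE (a b : 'I_m.+3) : Cn a b = (b == a + 1) || (a == b + 1).
Proof. by rewrite /cycle_graph -!val_eqE /= !modnDmr !addn1. Qed.

Lemma cycle_graph_sym : symmetric Cn.
Proof. by move=> a b; rewrite !cycle_graphE orbC. Qed.

Lemma cycle_graph_nbr (a b : 'I_m.+3) : Cn a b = (b == a + 1) || (b == a - 1).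
Proof. by rewrite cycle_graphE [b == a - 1]eq_sym subr_eq. Qed.

Lemma cycle_graph_two_nbrs (a p q w : 'I_m.+3) :
  Cn a p -> Cn a q -> Cn a w -> p != q -> w != p -> w = q.
Proof.
by rewrite !cycle_graph_nbr => /orP[] /eqP-> /orP[] /eqP-> /orP[] /eqP->; rewrite ?eqxx.
Qed.

Definition dihedral (eps : bool) (c x : 'I_m.+3) := if eps then x + c else c - x.

Lemma dihedral_bij eps c : bijective (dihedral eps c).
Proof.
case: eps; last by exists (dihedral false c) => x; rewrite /dihedral; ring.
by exists (dihedral true (- c)) => x; rewrite /dihedral; ring.
Qed.

Lemma dihedral_edge eps c a b : Cn (dihedral eps c a) (dihedral eps c b) = Cn a b.
Proof.
rewrite !cycle_graphE /dihedral; case: eps; first by rewrite !(addrAC _ c) !(inj_eq (addIr c)).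
have flip x y : (c - y == c - x + 1) = (x == y + 1).
  apply/eqP/eqP => [yx | ->]; last by ring.
  have -> : x = c - (c - x + 1) + 1 by ring.
  by rewrite -yx; ring.
by rewrite !flip orbC.
Qed.

Lemma dihedral_of_edge a b a' b' : Cn a b -> Cn a' b' ->
  exists eps c, dihedral eps c a = a' /\ dihedral eps c b = b'.
Proof.
rewrite !cycle_graph_nbr => /orP[] /eqP-> /orP[] /eqP->.
- by exists true, (a' - a); split; rewrite /dihedral; ring.
- by exists false, (a' + a); split; rewrite /dihedral; ring.
- by exists false, (a' + a); split; rewrite /dihedral; ring.
- by exists true, (a' - a); split; rewrite /dihedral; ring.
Qed.

Section Agreement.
Variables (A : {set 'I_m.+3}) (f : 'I_m.+3 -> 'I_m.+3).
Hypotheses (f_inj : {in A &, injective f})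
  (f_hom : {in A &, forall x y, Cn x y -> Cn (f x) (f y)}).

Definition agrees_near (h : 'I_m.+3 -> 'I_m.+3) x :=
  (f x == h x) && [forall w, (w \in A) && Cn x w ==> (f w == h w)].

(* Both [f] and [dihedral eps c] map the two neighbours of [x] to the two neighbours of [f x]. *)
Lemma agrees_near_nbr eps c x y : x \in A -> y \in A -> Cn x y -> f x = dihedral eps c x ->
  f y = dihedral eps c y -> agrees_near (dihedral eps c) x.
Proof.
move=> xA yA xy fx fy; rewrite /agrees_near fx eqxx /=.
apply/forall_inP => w /andP[wA xw]; apply/eqP.
case: (eqVneq w y) => [-> // | wy].
apply: (@cycle_graph_two_nbrs (f x) (f y)).
- exact: f_hom.
- by rewrite fx dihedral_edge.
- exact: f_hom.
- by rewrite fy (inj_eq (bij_inj (dihedral_bij _ _))) eq_sym.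
- by apply: contra_neq wy => /(f_inj wA yA).
Qed.

Lemma agrees_near_start a0 : a0 \in A -> exists eps c, agrees_near (dihedral eps c) a0.
Proof.
move=> a0A; case: (boolP [exists b, (b \in A) && Cn a0 b]) => [/existsP[b /andP[bA a0b]] | none].
  have [eps [c [h0 hb]]] := dihedral_of_edge a0b (f_hom a0A bA a0b).
  by exists eps, c; apply: (agrees_near_nbr a0A bA a0b).
exists true, (f a0 - a0); rewrite /agrees_near /dihedral subrKC eqxx /=.
by apply/forall_inP => w wA; case/negP: none; apply/existsP; exists w.
Qed.

Lemma agrees_near_edge eps c x y : x \in A -> y \in A -> Cn x y ->
  agrees_near (dihedral eps c) x -> agrees_near (dihedral eps c) y.
Proof.
move=> xA yA xy /andP[/eqP fx /forall_inP near_x].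
have fy : f y = dihedral eps c y by apply/eqP/near_x; rewrite yA xy.
by apply: (agrees_near_nbr yA xA _ fy fx); rewrite cycle_graph_sym.
Qed.

End Agreement.

Lemma CMI_cycle_graph : CMI Cn.
Proof.
move=> A cA f f_inj f_hom.
have [a0 a0A] : exists a0, a0 \in A by case/andP: cA => /set0Pn.
have [eps [c near_a0]] := agrees_near_start f_inj f_hom a0A.
exists (dihedral eps c); split; [exact: dihedral_bij | exact: dihedral_edge |].
move=> x xA.
have cl : closed (edge_in Cn A) [pred z | (z \in A) ==> agrees_near A f (dihedral eps c) z].
  apply: (intro_closed (sym_connect_sym (edge_in_sym cycle_graph_sym A))).
  move=> u v /and3P[uA vA uv]; rewrite !inE uA vA /=.
  exact: agrees_near_edge.
have := closed_connect cl (connected_inP cA a0A xA).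
by rewrite !inE a0A xA near_a0 => /esym/andP[/eqP].
Qed.

End CycleGraph.

Section TransitiveCopies.
Variables (T : finType) (e : rel T).
Hypothesis e_sym : symmetric e.

(* The copies are indexed by the roots [r] of the components: [(r, v)] is sent to [g_r (psi v)]
   for an automorphism [g_r] mapping [v0] to [r], hence the component of [v0] onto that of [r]. *)
Lemma transitive_copies (V : finType) (eV : rel V) (v0 : T) (psi : V -> T) :
  (forall r, exists2 g, graph_auto e g & g v0 = r) ->
  injective psi -> (forall v, connect e v0 (psi v)) ->
  (forall x, connect e v0 x -> exists v, psi v = x) ->
  (forall v w, e (psi v) (psi w) = eV v w) ->
  exists k, graph_iso e (copies k eV).
Proof.
move=> trans psi_inj psi_conn psi_onto psi_e.
have cs := sym_connect_sym e_sym.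
have [sg sg_auto sg_v0] := fin_all_exists2 trans.
have sg_inj r : injective (sg r) by case: (sg_auto r) => /bij_inj.
have [vd _] := psi_onto v0 (connect0 _ _).
pose phi y := odflt vd [pick v | psi v == y].
have phiK : cancel psi phi.
  by move=> v; rewrite /phi; case: pickP => [w /eqP/psi_inj -> | /(_ v)]; rewrite ?eqxx.
have psiK x : connect e v0 x -> psi (phi x) = x by case/psi_onto=> v <-; rewrite phiK.
pose R := [set x | root e x == x].
have rootR x : root e x \in R by rewrite inE root_root.
pose F (p : 'I_#|R| * V) := sg (enum_val p.1) (psi p.2).
pose G x := (enum_rank_in (rootR v0) (root e x), phi (finv (sg (root e x)) x)).
have rootF p : root e (F p) = enum_val p.1.
  have /[!inE] /eqP rr := enum_valP p.1.
  have := graph_auto_connect (sg_auto (enum_val p.1)) (psi_conn p.2).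
  by rewrite sg_v0 => /(rootP cs) <-.
have FK : cancel F G.
  by case=> i v; rewrite /G rootF enum_valK_in /F /= (finv_f (sg_inj _)) phiK.
have GK : cancel G F.
  move=> x; rewrite /F /G /= (enum_rankK_in _ (rootR x)); set r := root e x.
  have : connect e v0 (finv (sg r) x).
    rewrite -[v0](finv_f (sg_inj r)) sg_v0; apply: graph_auto_connect (graph_auto_finv _) _.
      exact: sg_auto.
    by rewrite cs connect_root.
  by move/psiK ->; rewrite (f_finv (sg_inj r)).
exists #|R|, G; split; first by exists F.
move=> x y; rewrite -[x]GK -[y]GK !FK; case: (G x) (G y) => i v [j w].
rewrite /copies /=; case: (eqVneq i j) => [<- | ij] /=.
  by rewrite /F; case: (sg_auto (enum_val i)) => _ ->; rewrite psi_e.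
apply/esym/negP => /connect1/(rootP cs); rewrite !rootF => /enum_val_inj/eqP.
by rewrite (negbTE ij).
Qed.

End TransitiveCopies.

Section Paths.
Variables (T : finType) (e : rel T).
Hypotheses (e_sym : symmetric e) (e_irr : irreflexive e).

Lemma edge_neq x y : e x y -> x != y.
Proof. by apply: contraL => /eqP->; rewrite e_irr. Qed.

Definition simple_path (p : nat -> T) j :=
  (forall i, i.+1 < j -> e (p i) (p i.+1)) /\
  (forall i k, i < j -> k < j -> p i = p k -> i = k).

Definition induced_path (p : nat -> T) j :=
  forall i k, i < j -> k < j -> e (p i) (p k) = (i == k.+1) || (k == i.+1).

Lemma simple_path_le p j j' : j' <= j -> simple_path p j -> simple_path p j'.
Proof.
move=> le [adj inj]; split=> [i ij|i k ij kj]; [apply: adj|apply: inj];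
  exact: leq_trans le.
Qed.

Lemma induced_path_le p j j' : j' <= j -> induced_path p j -> induced_path p j'.
Proof. by move=> le ind i k ij kj; apply: ind; apply: leq_trans le. Qed.

Lemma simple_path_drop p a j :
  simple_path p (a + j) -> simple_path (fun i => p (a + i)) j.
Proof.
case=> adj inj; split=> [i ij|i k ij kj /inj].
  by rewrite addnS; apply: adj; rewrite -addnS ltn_add2l.
by rewrite !ltn_add2l => /(_ ij kj) /addnI.
Qed.

Lemma induced_pathW p j :
  (forall i k, i < k -> k < j -> e (p i) (p k) = (k == i.+1)) -> induced_path p j.
Proof.
move=> ind i k ij kj; case: (ltngtP i k) => [ik|ki|<-].
- by rewrite ind // orbC; case: eqP => //; lia.
- by rewrite e_sym ind //; case: eqP => //; lia.
- by rewrite e_irr; case: eqP; lia.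
Qed.

Lemma simple_path_nth x0 s : uniq s ->
  (forall i, i.+1 < size s -> e (nth x0 s i) (nth x0 s i.+1)) ->
  simple_path (nth x0 s) (size s).
Proof. by move=> s_uniq adj; split=> // i k ik jk /eqP; rewrite nth_uniq // => /eqP. Qed.

Lemma simple_path_card p j : simple_path p j -> j <= #|T|.
Proof.
case=> _ inj; have p_inj : injective (fun i : 'I_j => p i).
  by move=> [a aj] [b bj] /= /(inj _ _ aj bj) ab; apply: val_inj.
by have := leq_card _ p_inj; rewrite card_ord.
Qed.

Definition path_vertices (p : nat -> T) j := [set p i | i : 'I_j].

Lemma mem_path_vertices p j i : i < j -> p i \in path_vertices p j.
Proof. by move=> ij; apply/imsetP; exists (Ordinal ij). Qed.

Lemma path_vertices_connected p j : 0 < j -> simple_path p j ->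
  connected_in e (path_vertices p j).
Proof.
move=> j0 [adj _].
have from0 i : i < j -> connect (edge_in e (path_vertices p j)) (p 0) (p i).
  elim: i => [|i IH] ij; first exact: connect0.
  apply: connect_trans (IH (ltnW ij)) (connect1 _).
  by rewrite /edge_in !mem_path_vertices ?adj // ltnW.
apply/andP; split; first by apply/set0Pn; exists (p 0); apply: mem_path_vertices.
apply/forall_inP=> _ /imsetP[[a aj] _ ->]; apply/forall_inP=> _ /imsetP[[b bj] _ ->].
apply: connect_trans (from0 _ bj).
by rewrite (sym_connect_sym (edge_in_sym e_sym _)) from0.
Qed.

(* The map [p i |-> q i] is a monomorphism from the connected set of vertices of [p]. *)
Lemma CMI_induced_path (cmi : CMI e) p q j :
  induced_path p j -> simple_path p j -> simple_path q j -> induced_path q j.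
Proof.
case: (posnP j) => [-> | j0] ip wp wq; first by [].
pose idx x := if [pick t : 'I_j | p t == x] is Some t then val t else 0.
have idxK t : t < j -> idx (p t) = t.
  rewrite /idx => tj; case: pickP => [s /eqP | /(_ (Ordinal tj))]; last by rewrite eqxx.
  exact: wp.2 _ _ (ltn_ord s) tj.
have f_inj : {in path_vertices p j &, injective (q \o idx)}.
  move=> _ _ /imsetP[[a aj] _ ->] /imsetP[[b bj] _ ->] /=.
  by rewrite !idxK // => /(wq.2 _ _ aj bj) ->.
have f_hom : {in path_vertices p j &, forall x y, e x y -> e (q (idx x)) (q (idx y))}.
  move=> _ _ /imsetP[[a aj] _ ->] /imsetP[[b bj] _ ->] /=.
  rewrite !idxK // ip // => /orP[] /eqP ab; subst; last exact: wq.1.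
  by rewrite e_sym; apply: wq.1.
have := CMI_mono_reflect cmi (path_vertices_connected j0 wp) f_inj f_hom.
move=> refl a b aj bj; rewrite -ip //.
by have := refl _ _ (mem_path_vertices p aj) (mem_path_vertices p bj); rewrite /= !idxK.
Qed.

End Paths.

Section SmallPaths.
Variables (T : finType) (e : rel T).
Hypotheses (e_sym : symmetric e) (e_irr : irreflexive e).

Lemma simple_path3 a b c : e a b -> e b c -> a != c ->
  simple_path e (nth a [:: a; b; c]) 3.
Proof.
move=> ab bc ac; apply: (@simple_path_nth _ _ a [:: a; b; c]) => [|[|[|]]] //.
by rewrite /= !inE !negb_or ac !(edge_neq e_irr ab, edge_neq e_irr bc).
Qed.

Lemma simple_path4 a b c d : e a b -> e b c -> e c d -> a != c -> a != d -> b != d ->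
  simple_path e (nth a [:: a; b; c; d]) 4.
Proof.
move=> ab bc cd ac ad bd.
apply: (@simple_path_nth _ _ a [:: a; b; c; d]) => [|[|[|[|]]]] //.
by rewrite /= !inE !negb_or ac ad bd !(edge_neq e_irr ab, edge_neq e_irr bc, edge_neq e_irr cd).
Qed.

Lemma induced_path3 a b c : e a b -> e b c -> ~~ e a c ->
  induced_path e (nth a [:: a; b; c]) 3.
Proof.
move=> ab bc /negbTE ac; apply: induced_pathW => // - [|[|[|i]]] [|[|[|k]]] //=.
Qed.

Lemma induced_path4 a b c d : e a b -> e b c -> e c d ->
  ~~ e a c -> ~~ e a d -> ~~ e b d -> induced_path e (nth a [:: a; b; c; d]) 4.
Proof.
move=> ab bc cd /negbTE ac /negbTE ad /negbTE bd.
by apply: induced_pathW => // - [|[|[|[|i]]]] [|[|[|[|k]]]].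
Qed.

End SmallPaths.

Section ForbiddenSubgraphs.
Variables (T : finType) (e : rel T).
Hypotheses (e_sym : symmetric e) (e_irr : irreflexive e).

Lemma connect_edge_of_P3_free :
  (forall a b c, e a b -> e b c -> a != c -> e a c) ->
  forall x y, connect e x y -> x != y -> e x y.
Proof.
move=> P3_free x y cxy.
have cl : closed e [pred z | (z == x) || e x z].
  apply: (intro_closed (sym_connect_sym e_sym)) => u v uv; rewrite !inE.
  case/orP=> [/eqP <- | xu]; first by rewrite uv orbT.
  by case: (eqVneq v x) => //= vx; apply: P3_free xu uv _; rewrite eq_sym.
by have := closed_connect cl cxy; rewrite !inE eqxx eq_sym => /esym; case: eqVneq.
Qed.

Hypothesis cmi : CMI e.

Lemma CMI_triangle_free a b c : e a b -> e b c -> ~~ e a c -> a != c ->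
  forall x y z, e x y -> e y z -> ~~ e x z.
Proof.
move=> ab bc nac ac x y z xy yz; apply/negP => xz.
have := CMI_induced_path e_sym cmi (induced_path3 e_sym e_irr ab bc nac)
  (simple_path3 e_irr ab bc ac) (simple_path3 e_irr xy yz (edge_neq e_irr xz)).
by move=> /(_ 0 2 isT isT) /=; rewrite xz.
Qed.

Definition P4_free := forall a b c d, e a b -> e b c -> e c d ->
  ~~ e a c -> ~~ e a d -> ~~ e b d -> False.

Definition path_snoc (p : nat -> T) m y i := if i == m then y else p i.

Lemma simple_path_snoc p m y : 0 < m -> simple_path e p m ->
  e (p m.-1) y -> (forall t, t < m -> y != p t) -> simple_path e (path_snoc p m y) m.+1.
Proof.
rewrite /path_snoc => m0 [adj inj] xy y_new; split=> [i im | i k im km].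
  case: (eqVneq i.+1 m) => [im1 | ne]; first by move: xy; rewrite -im1 (ltn_eqF (ltnSn i)).
  by rewrite ifN; [apply: (adj i) | ]; lia.
case: (eqVneq i m) => [-> | im']; case: (eqVneq k m) => [-> | km'] //.
- by move=> E; have := y_new k; rewrite E eqxx; lia.
- by move=> E; have := y_new i; rewrite E eqxx; lia.
- by apply: inj; lia.
Qed.

(* Any chord from [y] to an inner vertex [p i] would make the path [p i, ..., p m.-1, y]
   non-induced, although it is as long as the induced path [p 0, ..., p (m - i)]. *)
Lemma induced_path_snoc p m y : 3 < m ->
  induced_path e p m -> simple_path e p m -> simple_path e (path_snoc p m y) m.+1 ->
  ~~ e (p 0) y -> induced_path e (path_snoc p m y) m.+1.
Proof.
move=> m3 ip wp wq n0y; apply: induced_pathW => // i k ik km.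
rewrite /path_snoc; case: (eqVneq k m) => [km' | km']; last first.
  by rewrite ifN ?ip //; lia.
subst k; rewrite ifN; last by lia.
case: (eqVneq i m.-1) => [-> | im1].
  have := wq.1 m.-1; rewrite /path_snoc ifN ?prednK ?eqxx; lia.
case: (eqVneq i 0) => [-> | i0]; first by rewrite (negbTE n0y); case: eqP; lia.
have lt_im : i < m.-1 by lia.
rewrite (_ : (m == i.+1) = false); last by lia.
set L := m.+1 - i.
have L_le : L <= m by lia.
have wr : simple_path e (fun t => path_snoc p m y (i + t)) L.
  by apply: simple_path_drop; rewrite subnKC //; lia.
have := CMI_induced_path e_sym cmi (induced_path_le L_le ip) (simple_path_le L_le wp) wr.
move=> /(_ 0 L.-1 _ _); rewrite /path_snoc addn0 ifN; last by lia.
rewrite (_ : i + L.-1 = m) ?eqxx; last by lia.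
by move=> ->; rewrite ?orbF //; lia.
Qed.

(* If both further neighbours [y1], [y2] of the end [x] were adjacent to [p 0], the simple
   path [y2, p 0, y1, x] would be as long as the induced path [p 0, ..., p 3] but not induced. *)
Lemma induced_path_grow p m : (forall x, 2 < #|nbhd e x|) -> 3 < m ->
  induced_path e p m -> simple_path e p m ->
  exists q, induced_path e q m.+1 /\ simple_path e q m.+1.
Proof.
move=> deg3 m3 ip wp; set x := p m.-1; set z := p m.-2.
have zx : e z x by rewrite /x /z ip; lia.
have [y1 [y2 [y1N y2N y12]]] :
    exists y1 y2, [/\ y1 \in nbhd e x :\ z, y2 \in nbhd e x :\ z & y1 != y2].
  by apply/card_gt1P; have := deg3 x; rewrite (cardsD1 z) inE e_sym zx; lia.
have grow y : y \in nbhd e x :\ z -> ~~ e (p 0) y ->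
    exists q, induced_path e q m.+1 /\ simple_path e q m.+1.
  rewrite !inE => /andP[yz xy] n0y; exists (path_snoc p m y).
  have wq : simple_path e (path_snoc p m y) m.+1.
    apply: simple_path_snoc => // [|t tm]; first by lia.
    apply: contra yz => /eqP yt; move: xy; rewrite yt /x ip; try lia.
    by case/orP=> /eqP tm'; [rewrite /z (_ : m.-2 = t) //| ]; lia.
  by split=> //; apply: induced_path_snoc.
case: (boolP (e (p 0) y1)) => [py1 | ]; last exact: grow.
case: (boolP (e (p 0) y2)) => [py2 | ]; last exact: grow.
exfalso; move: y1N y2N; rewrite !inE => /andP[_ xy1] /andP[_ xy2].
have p0x : p 0 != x.
  by apply/eqP => E; have := wp.2 0 m.-1 (ltac:(lia)) (ltac:(lia)) E; lia.
have w4 : simple_path e (nth y2 [:: y2; p 0; y1; x]) 4.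
  apply: simple_path4 => //; rewrite 1?e_sym 1?eq_sym //.
  by rewrite (edge_neq e_irr xy2).
have := CMI_induced_path e_sym cmi (induced_path_le m3 ip) (simple_path_le m3 wp) w4.
by move=> /(_ 0 3 isT isT) /=; rewrite e_sym xy2.
Qed.

(* An induced path on four vertices could be grown into arbitrarily long induced paths. *)
Lemma CMI_P4_free : (forall x, 2 < #|nbhd e x|) -> P4_free.
Proof.
move=> deg3 a b c d ab bc cd nac nad nbd.
have ac : a != c by apply: contraNneq nad => ->.
have ad : a != d by apply: contraNneq nac => ->; rewrite e_sym.
have bd : b != d by apply: contraNneq nad => <-.
have long t : exists q, induced_path e q (4 + t) /\ simple_path e q (4 + t).
  elim: t => [|t [q [iq wq]]].
    exists (nth a [:: a; b; c; d]); split; first exact: induced_path4.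
    exact: simple_path4.
  by rewrite addnS; apply: induced_path_grow iq wq.
by have [q [_ /simple_path_card]] := long #|T|; lia.
Qed.

End ForbiddenSubgraphs.

Section Bipartite.
Variables (T : finType) (e : rel T).
Hypotheses (e_sym : symmetric e) (e_irr : irreflexive e).
Hypotheses (tri_free : forall x y z, e x y -> e y z -> ~~ e x z) (P4 : P4_free e).
Variable v0 : T.

Lemma P4_free_dist2 x : connect e v0 x ->
  [|| x == v0, e v0 x | [exists w, e v0 w && e w x]].
Proof.
pose B := [pred x | [|| x == v0, e v0 x | [exists w, e v0 w && e w x]]].
have cl : closed e B.
  apply: (intro_closed (sym_connect_sym e_sym)) => u v uv; rewrite !inE.
  case/or3P => [/eqP <- | v0u | /existsP[w /andP[v0w wu]]]; first by rewrite uv orbT.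
    by apply/or3P/Or33/existsP; exists u; rewrite v0u.
  case: (eqVneq v v0) => //= vv0; case: (boolP (e v0 v)) => //= nv0v.
  apply/existsP; case: (boolP (e w v)) => [wv | nwv]; first by exists w; rewrite v0w.
  case: (boolP (e v0 u)) => [v0u | nv0u]; first by exists u; rewrite v0u.
  by case: (P4 v0w wu uv nv0u nv0v nwv).
by move=> cx; have := closed_connect cl cx; rewrite !inE eqxx /= => <-.
Qed.

Definition far_side := [set x | connect e v0 x && ~~ e v0 x].

Lemma nbhd_indep x y : x \in nbhd e v0 -> y \in nbhd e v0 -> ~~ e x y.
Proof. by rewrite !inE => v0x v0y; apply: tri_free v0y; rewrite e_sym. Qed.

Lemma far_side_indep x y : x \in far_side -> y \in far_side -> ~~ e x y.
Proof.
rewrite !inE => /andP[cx nx] /andP[cy ny]; apply/negP => xy.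
case/or3P: (P4_free_dist2 cx) => [/eqP xv | v0x | /existsP[w /andP[v0w wx]]].
- by move: ny; rewrite -xv xy.
- by rewrite v0x in nx.
case: (eqVneq y v0) => [yv | yv]; first by move: nx; rewrite -yv e_sym xy.
case: (boolP (e w y)) => [wy | nwy]; first by move: (tri_free wx xy); rewrite wy.
exact: P4 v0w wx xy nx ny nwy.
Qed.

Lemma nbhd_far_side_edge x y : x \in nbhd e v0 -> y \in far_side -> e x y.
Proof.
move=> xN; rewrite inE => /andP[cy ny].
case/or3P: (P4_free_dist2 cy) => [yv | v0y | /existsP[w /andP[v0w wy]]].
- by move: xN; rewrite (eqP yv) inE e_sym.
- by rewrite v0y in ny.
case: (eqVneq x w) => [-> // | xw]; apply/negPn/negP => nxy.
have nxw : ~~ e x w by apply: (nbhd_indep xN); rewrite inE.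
by apply: (P4 _ v0w wy nxw nxy ny); move: xN; rewrite inE e_sym.
Qed.

Lemma far_side_nbhd y : y \in nbhd e v0 -> far_side = nbhd e y.
Proof.
move=> yN; apply/setP => z; apply/idP/idP => [zM | ]; first by rewrite inE nbhd_far_side_edge.
rewrite !inE => yz; apply/andP; split.
  by apply: connect_trans (connect1 _) (connect1 yz); rewrite inE in yN.
by have := contraL (nbhd_indep yN) yz; rewrite inE.
Qed.

Hypothesis cmi : CMI e.

Lemma CMI_Kss_copies : 0 < #|nbhd e v0| -> exists k, graph_iso e (copies k (Kss #|nbhd e v0|)).
Proof.
case/card_gt0P => y0 y0N; set N := nbhd e v0; set M := far_side.
have cardM : #|M| = #|N| by rewrite /M (far_side_nbhd y0N) (CMI_regular e_irr cmi y0 v0).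
have MN x : x \in M -> x \notin N by rewrite !inE => /andP[].
pose psi (p : bool * 'I_#|N|) :=
  if p.1 then enum_val (cast_ord (esym cardM) p.2) else enum_val p.2.
have psiM i : psi (true, i) \in M by apply: enum_valP.
have psiN i : psi (false, i) \in N by apply: enum_valP.
apply: (transitive_copies e_sym (v0 := v0) (psi := psi)).
- exact: CMI_transitive.
- move=> [[] i] [[] j] //=.
  + by move/enum_val_inj/cast_ord_inj => /= ->.
  + by move=> E; have := MN _ (psiM i); rewrite [psi _]E psiN.
  + by move=> E; have := MN _ (psiM j); rewrite -[psi (true, _)]E psiN.
  + by move/enum_val_inj => /= ->.
- case=> [[] i]; first by have /[!inE] /andP[] := psiM i.
  by have /[!inE] := psiN i; apply: connect1.
- move=> x cx; case: (boolP (e v0 x)) => v0x.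
    have xN : x \in N by rewrite inE.
    by exists (false, enum_rank_in xN x); rewrite /psi /= enum_rankK_in.
  have xM : x \in M by rewrite inE cx.
  by exists (true, cast_ord cardM (enum_rank_in xM x)); rewrite /psi /= cast_ordK enum_rankK_in.
- move=> [[] i] [[] j]; rewrite /Kss /=.
  + exact/negbTE/far_side_indep.
  + by rewrite e_sym nbhd_far_side_edge.
  + exact: nbhd_far_side_edge.
  + exact/negbTE/nbhd_indep.
Qed.

End Bipartite.

Section Rotation.
Variables (T : finType) (e : rel T).
Hypotheses (e_sym : symmetric e) (e_irr : irreflexive e).
Hypothesis deg2 : forall x, #|nbhd e x| = 2.
Variables (rho : T -> T) (v0 : T).
Hypotheses (rho_auto : graph_auto e rho) (v0_rho : e v0 (rho v0)) (rho2 : rho (rho v0) != v0).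

Let rho_inj : injective rho := bij_inj rho_auto.1.
Let n := order rho v0.
Let cyc i := iter i rho v0.

Lemma cyc_mod i : cyc i = cyc (i %% n).
Proof.
rewrite /cyc {1}(divn_eq i n) addnC iterD; congr iter.
by elim: (i %/ n) => // k IH; rewrite mulSn iterD IH (iter_order rho_inj).
Qed.

Lemma cyc_eq i j : (cyc i == cyc j) = (i == j %[mod n]).
Proof.
apply/eqP/eqP => [| ij]; last by rewrite cyc_mod ij -cyc_mod.
rewrite cyc_mod [cyc j]cyc_mod => /(congr1 (findex rho v0)).
by rewrite !findex_iter ?ltn_pmod ?order_gt0.
Qed.

Lemma cyc_edge i : e (cyc i) (cyc i.+1).
Proof.
elim: i => // i IH; rewrite /cyc !iterS.
by case: rho_auto => _ ->.
Qed.

Lemma order_ge3 : 3 <= n.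
Proof.
have : cyc 1 != cyc 0 by rewrite eq_sym (edge_neq e_irr v0_rho).
have : cyc 2 != cyc 0 := rho2.
by rewrite !cyc_eq; move: (order_gt0 rho v0); rewrite -/n; case: n => [|[|[|]]].
Qed.

Lemma cyc_pred i : cyc (i + n.-1).+1 = cyc i.
Proof. by apply/eqP; rewrite cyc_eq -addnS prednK ?order_gt0 // modnDr. Qed.

Lemma nbhd_cyc i : nbhd e (cyc i) = [set cyc (i + n.-1); cyc i.+1].
Proof.
apply/esym/eqP; rewrite eqEcard cards2 deg2 andbC.
have -> : cyc (i + n.-1) != cyc i.+1.
  rewrite cyc_eq -addn1 eqn_modDl modn_small ?modn_small; have := order_ge3; lia.
apply/subsetP => z /set2P[] ->; rewrite inE ?cyc_edge //.
by rewrite e_sym -(cyc_pred i) cyc_edge.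
Qed.

Lemma cyc_edgeE i j : e (cyc i) (cyc j) = (cyc j == cyc i.+1) || (cyc i == cyc j.+1).
Proof.
apply/idP/orP => [ij | [] /eqP ->]; [| exact: cyc_edge | by rewrite e_sym cyc_edge].
have : cyc j \in nbhd e (cyc i) by rewrite inE.
rewrite nbhd_cyc => /set2P[] E; last by left; rewrite E.
by right; rewrite -(cyc_pred i) /cyc !iterS -/(cyc j) E.
Qed.

Lemma cycle_graph_cyc (i j : 'I_n) : e (cyc i) (cyc j) = cycle_graph n i j.
Proof. by rewrite cyc_edgeE !cyc_eq /cycle_graph !(modn_small (ltn_ord _)). Qed.

Lemma connect_cyc i : connect e v0 (cyc i).
Proof. by elim: i => [|i IH]; [apply: connect0 | apply: connect_trans IH (connect1 (cyc_edge i))]. Qed.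

Lemma cyc_onto x : connect e v0 x -> exists2 i, i < n & cyc i = x.
Proof.
have cl : closed e [pred z | fconnect rho v0 z].
  apply: (intro_closed (sym_connect_sym e_sym)) => a b ab /iter_findex ea.
  have : b \in nbhd e a by rewrite inE.
  by rewrite -ea nbhd_cyc => /set2P[] ->; apply: fconnect_iter.
move=> /(closed_connect cl); rewrite !inE connect0 => /esym vx.
by exists (findex rho v0 x); [apply: findex_max | apply: iter_findex].
Qed.

Hypothesis cmi : CMI e.

Lemma rotation_copies : exists k, graph_iso e (copies k (cycle_graph n)).
Proof.
apply: (transitive_copies e_sym (v0 := v0) (psi := fun i : 'I_n => cyc i)).
- exact: CMI_transitive.
- move=> i j /eqP; rewrite cyc_eq !modn_small // => /eqP; apply: val_inj.
- by move=> i; apply: connect_cyc.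
- by move=> x /cyc_onto[i ilt <-]; exists (Ordinal ilt).
- exact: cycle_graph_cyc.
Qed.

End Rotation.

(* The automorphism extending [v0 |-> u, u |-> u'] along a path [v0, u, u'] rotates the cycle
   through [v0]. *)
Lemma CMI_cycle_copies (T : finType) (e : rel T) (e_sym : symmetric e) (e_irr : irreflexive e)
  (cmi : CMI e) (deg2 : forall x, #|nbhd e x| = 2) (v0 : T) :
  exists2 n, 3 <= n & exists k, graph_iso e (copies k (cycle_graph n)).
Proof.
have [u v0u] : exists u, e v0 u.
  have /card_gt0P[u] : 0 < #|nbhd e v0| by rewrite deg2.
  by rewrite inE; exists u.
have [u' /andP[u'v0 uu']] : exists u', (u' != v0) && e u u'.
  have /card_gt0P[u'] : 0 < #|nbhd e u :\ v0|.
    by have := deg2 u; rewrite (cardsD1 v0) inE e_sym v0u; lia.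
  by rewrite !inE; exists u'.
pose f x := if x == v0 then u else u'.
have uv0 : u != v0 by rewrite eq_sym (edge_neq e_irr v0u).
have f_inj : {in [set v0; u] &, injective f}.
  move=> a b /set2P[] -> /set2P[] ->; rewrite /f ?eqxx ?(negbTE uv0) // => E.
    by move: uu'; rewrite E e_irr.
  by move: uu'; rewrite E e_irr.
have f_hom : {in [set v0; u] &, forall x y, e x y -> e (f x) (f y)}.
  move=> a b /set2P[] -> /set2P[] ->; rewrite /f ?eqxx ?(negbTE uv0) ?e_irr //.
  by rewrite [e u' u]e_sym.
have [rho [rho_bij rho_e rho_f]] := cmi _ (connected_in2 e_sym v0u) f f_inj f_hom.
have rho_auto : graph_auto e rho by split.
have rho_v0 : rho v0 = u by rewrite rho_f ?inE ?eqxx // /f eqxx.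
have rho_u : rho u = u' by rewrite rho_f ?inE ?eqxx ?orbT // /f (negbTE uv0).
have rho2 : rho (rho v0) != v0 by rewrite rho_v0 rho_u.
have v0_rho : e v0 (rho v0) by rewrite rho_v0.
exists (order rho v0); first exact: order_ge3 v0_rho rho2.
exact: rotation_copies.
Qed.

Lemma induced_P3_or_P3_free (T : finType) (e : rel T) :
  (exists a b c, [/\ e a b, e b c, a != c & ~~ e a c]) \/
  (forall a b c, e a b -> e b c -> a != c -> e a c).
Proof.
case: (boolP [exists a, exists b, exists c, [&& e a b, e b c, a != c & ~~ e a c]]).
  by case/existsP=> a /existsP[b /existsP[c /and4P[]]]; left; exists a, b, c.
move/existsPn=> P3_free; right=> a b c ab bc ac; apply/negPn/negP => nac.
by have /existsPn/(_ b)/existsPn/(_ c) := P3_free a; rewrite ab bc ac nac.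
Qed.

Lemma graph_iso_copies0 (T V : finType) (e : rel T) (eV : rel V) :
  #|T| = 0 -> graph_iso e (copies 0 eV).
Proof.
move=> /card0_eq T0; have F (x : T) : 'I_0 * V by have := T0 x; rewrite inE.
exists F; split; last by move=> x; have := T0 x; rewrite inE.
exists (fun p : 'I_0 * V => False_rect T (notF (ltn_ord p.1))) => [x | [[]] //].
by have := T0 x; rewrite inE.
Qed.

Lemma CMI_complete_copies (T : finType) (e : rel T) (e_sym : symmetric e)
  (e_irr : irreflexive e) (cmi : CMI e)
  (P3_free : forall a b c, e a b -> e b c -> a != c -> e a c) (v0 : T) :
  exists k n, 1 <= n /\ graph_iso e (copies k (complete_graph n)).
Proof.
pose C := [set x | connect e v0 x].
have [k iso] : exists k, graph_iso e (copies k (complete_graph #|C|)).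
  apply: (transitive_copies e_sym (v0 := v0) (psi := @enum_val _ (mem C))).
  - exact: CMI_transitive.
  - exact: enum_val_inj.
  - by move=> i; have /[!inE] := enum_valP i.
  - move=> x cx; have xC : x \in C by rewrite inE.
    by exists (enum_rank_in xC x); rewrite enum_rankK_in.
  - move=> i j; rewrite /complete_graph -(inj_eq enum_val_inj).
    case: eqVneq => [-> | ij]; first by rewrite e_irr.
    apply: connect_edge_of_P3_free ij => //; apply: connect_trans (_ : connect e _ v0) _.
      by rewrite (sym_connect_sym e_sym); have /[!inE] := enum_valP i.
    by have /[!inE] := enum_valP j.
by exists k, #|C|; split => //; apply/card_gt0P; exists v0; rewrite inE connect0.
Qed.

Theorem theorem4p2 (T : finType) (e : rel T)
  (e_sym : symmetric e) (e_irr : irreflexive e) :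
  CMI e <->
  [\/ exists (k n : nat), 1 <= n /\ graph_iso e (copies k (complete_graph n)),
      exists (k s : nat), 2 <= s /\ graph_iso e (copies k (Kss s))
    | exists (k n : nat), 3 <= n /\ graph_iso e (copies k (cycle_graph n))].
Proof.
split; last first.
  case=> [[k [n [_ iso]]] | [k [s [_ iso]]] | [k [[|[|[|n]]] [// _ iso]]]].
  - exact: CMI_iso iso (CMI_copies (@CMI_complete_graph n)).
  - exact: CMI_iso iso (CMI_copies (@CMI_Kss s)).
  - exact: CMI_iso iso (CMI_copies (@CMI_cycle_graph n)).
move=> cmi; case: (posnP #|T|) => [T0 | /card_gt0P[v0 _]].
  by constructor 1; exists 0, 1; split; last exact: graph_iso_copies0.
have [[a [b [c [ab bc ac nac]]]] | P3_free] := induced_P3_or_P3_free e; last first.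
  by constructor 1; apply: CMI_complete_copies.
have tri_free := CMI_triangle_free e_sym e_irr cmi ab bc nac ac.
have reg x : #|nbhd e x| = #|nbhd e b| := CMI_regular e_irr cmi x b.
have deg_b : 1 < #|nbhd e b| by apply/card_gt1P; exists a, c; rewrite !inE e_sym ab bc.
have [deg2 | deg3] := eqVneq #|nbhd e b| 2.
  have [n n3 [k iso]] := CMI_cycle_copies e_sym e_irr cmi (fun x => etrans (reg x) deg2) v0.
  by constructor 3; exists k, n.
have P4 : P4_free e by apply: CMI_P4_free => // x; rewrite reg; lia.
have [|k iso] := CMI_Kss_copies e_sym e_irr tri_free P4 cmi (v0 := v0); first by rewrite reg; lia.
by constructor 2; exists k, #|nbhd e v0|; split; [rewrite reg; lia | exact: iso].
Qed.
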